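(* Let $L$ be a Poisson $\mathfrak{h}$-base manifold. Then the bivector field $\varpi:=\sum_i\vec{\eta^i}\wedge\vec{h^i}$ is a Poisson bracket on $L$ making $L$ a Poisson-Lie $D(\mathfrak{h})$-manifold, and $\varpi$ coincides with the bivector field $\sum_i\vec{\eta^i}\otimes\vec{h^i}$, i.e. $\varpi(a,b)=\sum_i(\vec{\eta^i}a)(\vec{h^i}b)$.
   Context: $\mathfrak{h}$ is a finite dimensional complex Lie bialgebra and $D(\mathfrak{h})=\mathfrak{h}\oplus\mathfrak{h}^*_{op}$ its Drinfeld double ($\mathfrak{h}^*_{op}$ the dual Lie algebra with opposite bracket; $D(\mathfrak{h})$ carries the unique Lie bracket extending those of $\mathfrak{h}$, $\mathfrak{h}^*_{op}$ for which the natural symmetric pairing is invariant). $\{h^i\}$ is a basis of $\mathfrak{h}$ and $\{\eta^i\}$ the dual basis of $\mathfrak{h}^*_{op}$; $x\wedge y=\frac12(x\otimes y-y\otimes x)$. $D(\mathfrak{h})$ is a coboundary Lie bialgebra with r-matrix $r=\sum_i\eta^i\wedge h^i$, cobracket $\mu(x)=[x\otimes1+1\otimes x,r]$, and $\theta=\frac12\sum_i(\eta^i\otimes h^i+h^i\otimes\eta^i)$. A Poisson $\mathfrak{h}$-base manifold is a manifold $L$ whose function algebra $\mathcal{A}(L)$ carries an action $x\mapsto\vec x$ of $D(\mathfrak{h})$ by vector fields such that $\theta$ induces the zero bidifferential operator: $\sum_i\bigl((\vec{\eta^i}a)(\vec{h^i}b)+(\vec{h^i}a)(\vec{\eta^i}b)\bigr)=0$.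 A Poisson bracket $\pi$ on a manifold with action $x\mapsto\vec x$ of a Lie bialgebra with cobracket $\mu$ makes it a Poisson-Lie manifold if $\vec x\pi(a,b)-\pi(\vec xa,b)-\pi(a,\vec xb)=\overrightarrow{\mu(x)}(a,b)$ for all $x$ and functions $a,b$, where $\overrightarrow{\mu(x)}$ is the bidifferential operator induced by $\mu(x)$. *)

(* Algebraic model of the function algebra of a manifold:
   a commutative K-algebra A, vector fields = K-linear derivations of A. *)
From HB Require Import structures.
From mathcomp Require Import all_boot all_order all_algebra.
Set Implicit Arguments.
Unset Strict Implicit.
Unset Printing Implicit Defensive.
Import GRing.Theory.
Local Open Scope ring_scope.

Definition bvec {K : fieldType} {m : nat} (i : 'I_m) : 'rV[K]_m := delta_mx 0 i.

(* tensor product V (x) V of V = 'rV_m, identified with 'M_m: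
   u (x) v has coefficient matrix u^T *m v *)
Definition tens {K : fieldType} {m : nat} (u v : 'rV[K]_m) : 'M[K]_m := u^T *m v.

Definition wedge {K : fieldType} {m : nat} (u v : 'rV[K]_m) : 'M[K]_m :=
  2^-1 *: (tens u v - tens v u).

(* action of x on tensors: x.(u (x) v) = [x,u] (x) v + u (x) [x,v]
   i.e. [x (x) 1 + 1 (x) x, T] *)
Definition adT {K : fieldType} {m : nat} (br : 'rV[K]_m -> 'rV[K]_m -> 'rV[K]_m)
  (x : 'rV[K]_m) (T : 'M[K]_m) : 'M[K]_m :=
  \sum_(p < m) \sum_(q < m)
     T p q *: (tens (br x (bvec p)) (bvec q) + tens (bvec p) (br x (bvec q))).

Definition dotr {K : fieldType} {m : nat} (u v : 'rV[K]_m) : K := (u *m v^T) 0 0.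

Definition is_lie {K : fieldType} {m : nat} (br : 'rV[K]_m -> 'rV[K]_m -> 'rV[K]_m) : Prop :=
  (forall (k : K) x y z, br (k *: x + y) z = k *: br x z + br y z) /\
  (forall (k : K) x y z, br x (k *: y + z) = k *: br x y + br x z) /\
  (forall x, br x x = 0) /\
  (forall x y z, br x (br y (z)) + br y (br z x) + br z (br x y) = 0).

(* the bracket on h^* dual to the cobracket delta : h -> h (x) h :
   <[xi,zeta], x> = <xi (x) zeta, delta x> ; covectors written in the dual basis *)
Definition dual_br {K : fieldType} {n : nat} (delta : 'rV[K]_n -> 'M[K]_n)
  (xi zeta : 'rV[K]_n) : 'rV[K]_n :=
  \row_k (xi *m delta (bvec k) *m zeta^T) 0 0.

Definition is_lie_bialg {K : fieldType} {n : nat}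
  (brh : 'rV[K]_n -> 'rV[K]_n -> 'rV[K]_n) (delta : 'rV[K]_n -> 'M[K]_n) : Prop :=
  is_lie brh /\
  (forall (k : K) x y, delta (k *: x + y) = k *: delta x + delta y) /\
  (forall x, (delta x)^T = - delta x) /\
  is_lie (dual_br delta) /\
  (forall x y, delta (brh x y) = adT brh x (delta y) - adT brh y (delta x)).

(* D(h) = h (+) h^*_op, as 'rV_(n+n): first block h, second block h^* *)
Definition ih {K : fieldType} {n : nat} (x : 'rV[K]_n) : 'rV[K]_(n + n) := row_mx x 0.
Definition ieta {K : fieldType} {n : nat} (xi : 'rV[K]_n) : 'rV[K]_(n + n) := row_mx 0 xi.
Definition pairD {K : fieldType} {n : nat} (u v : 'rV[K]_(n + n)) : K :=
  dotr (lsubmx u) (rsubmx v) + dotr (rsubmx u) (lsubmx v).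

(* brD is the Drinfeld double bracket: a Lie bracket extending those of h and
   h^*_op for which the pairing is invariant (it is unique) *)
Definition is_double {K : fieldType} {n : nat}
  (brh : 'rV[K]_n -> 'rV[K]_n -> 'rV[K]_n) (delta : 'rV[K]_n -> 'M[K]_n)
  (brD : 'rV[K]_(n + n) -> 'rV[K]_(n + n) -> 'rV[K]_(n + n)) : Prop :=
  is_lie brD /\
  (forall x y, brD (ih x) (ih y) = ih (brh x y)) /\
  (forall xi zeta, brD (ieta xi) (ieta zeta) = ieta (- dual_br delta xi zeta)) /\
  (forall u v w, pairD (brD u v) w = pairD u (brD v w)).

Definition hD {K : fieldType} {n : nat} (i : 'I_n) : 'rV[K]_(n + n) := ih (bvec i).
Definition etaD {K : fieldType} {n : nat} (i : 'I_n) : 'rV[K]_(n + n) := ieta (bvec i).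

Definition rmat (K : fieldType) (n : nat) : 'M[K]_(n + n) :=
  \sum_(i < n) wedge (etaD i) (hD i).
Definition thetamat (K : fieldType) (n : nat) : 'M[K]_(n + n) :=
  2^-1 *: \sum_(i < n) (tens (etaD i) (hD i) + tens (hD i) (etaD i)).
(* cobracket of D(h): mu(x) = [x (x) 1 + 1 (x) x, r] *)
Definition mu {K : fieldType} {n : nat}
  (brD : 'rV[K]_(n + n) -> 'rV[K]_(n + n) -> 'rV[K]_(n + n)) (x : 'rV[K]_(n + n)) :=
  adT brD x (rmat K n).

Definition is_action {K : fieldType} {m : nat} {A : comAlgType K}
  (br : 'rV[K]_m -> 'rV[K]_m -> 'rV[K]_m) (act : 'rV[K]_m -> A -> A) : Prop :=
  (forall (k : K) x y a, act (k *: x + y) a = k *: act x a + act y a) /\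
  (forall x (k : K) a b, act x (k *: a + b) = k *: act x a + act x b) /\
  (forall x a b, act x (a * b) = act x a * b + a * act x b) /\
  (forall x y a, act (br x y) a = act x (act y a) - act y (act x a)).

Definition bidiff {K : fieldType} {m : nat} {A : comAlgType K}
  (act : 'rV[K]_m -> A -> A) (T : 'M[K]_m) (a b : A) : A :=
  \sum_(p < m) \sum_(q < m) T p q *: (act (bvec p) a * act (bvec q) b).

Definition is_poisson_h_base {K : fieldType} {n : nat} {A : comAlgType K}
  (brD : 'rV[K]_(n + n) -> 'rV[K]_(n + n) -> 'rV[K]_(n + n))
  (act : 'rV[K]_(n + n) -> A -> A) : Prop :=
  is_action brD act /\ (forall a b, bidiff act (thetamat K n) a b = 0).

Definition is_poisson {K : fieldType} {A : comAlgType K} (P : A -> A -> A) : Prop :=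
  (forall (k : K) a b c, P (k *: a + b) c = k *: P a c + P b c) /\
  (forall a b, P a b = - P b a) /\
  (forall a b c, P a (b * c) = P a b * c + b * P a c) /\
  (forall a b c, P a (P b c) + P b (P c a) + P c (P a b) = 0).

Definition is_poisson_lie {K : fieldType} {m : nat} {A : comAlgType K}
  (cobr : 'rV[K]_m -> 'M[K]_m) (act : 'rV[K]_m -> A -> A) (P : A -> A -> A) : Prop :=
  forall x a b, act x (P a b) - P (act x a) b - P a (act x b) = bidiff act (cobr x) a b.

From mathcomp Require Import all_boot all_order all_algebra.
From mathcomp.algebra_tactics Require Import ring.

(* Because θ induces the zero operator, the operator ϖ induced by ρ = Σ η^i ⊗ h^i
   is antisymmetric, hence equal to the operator induced by r = Σ η^i ∧ h^i.
   Since vector fields are derivations and x ↦ x⃗ is a Lie action, for every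
   tensor T the map (a, b) ↦ x⃗ T(a, b) - T(x⃗ a, b) - T(a, x⃗ b) is the operator
   induced by [x ⊗ 1 + 1 ⊗ x, T]; for T = r this is the Poisson-Lie identity.
   ϖ is a biderivation, and by antisymmetry its Jacobiator is the operator
   induced by the classical Yang-Baxter expression
   [ρ12, ρ13] + [ρ12, ρ23] + [ρ13, ρ23].  This vanishes in D(h): expanding the
   brackets in the dual bases, invariance of the pairing expresses the mixed
   brackets [h^i, η^j] through the structure constants of h and h^*, and the
   terms cancel in pairs. *)

Set Implicit Arguments.
Unset Strict Implicit.
Unset Printing Implicit Defensive.
Import GRing.Theory.
Local Open Scope ring_scope.

Lemma lie_antisym (K : fieldType) (m : nat) (br : 'rV[K]_m -> 'rV[K]_m -> 'rV[K]_m) :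
  is_lie br -> forall x y, br x y = - br y x.
Proof.
case=> brZDl [brZDr [brxx _]] x y.
have brDl u v w : br (u + v) w = br u w + br v w by rewrite -[u]scale1r brZDl !scale1r.
have brDr u v w : br w (u + v) = br w u + br w v by rewrite -[u]scale1r brZDr !scale1r.
apply/eqP; rewrite -addr_eq0; apply/eqP.
by have := brxx (x + y); rewrite brDl !brDr !brxx add0r addr0.
Qed.

(* Lets [ring] see scalars as elements of the algebra. *)
Lemma scale_in_alg (K : fieldType) (A : comAlgType K) (k : K) (x : A) :
  k *: x = in_alg A k * x.
Proof. by rewrite in_algE mulr_algl. Qed.

Lemma triple_sum_rev (V : nmodType) (n : nat) (F : 'I_n -> 'I_n -> 'I_n -> V) :
  \sum_(i < n) \sum_(j < n) \sum_(k < n) F i j k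
  = \sum_(i < n) \sum_(j < n) \sum_(k < n) F k j i.
Proof.
rewrite exchange_big /=; under eq_bigr do rewrite exchange_big /=.
by rewrite exchange_big.
Qed.

Section BidiffLinear.
Variables (K : fieldType) (m : nat) (A : comAlgType K) (act : 'rV[K]_m -> A -> A).

Lemma bidiffD T S a b : bidiff act (T + S) a b = bidiff act T a b + bidiff act S a b.
Proof.
rewrite /bidiff -big_split; apply: eq_bigr => p _.
by rewrite -big_split; apply: eq_bigr => q _; rewrite mxE scalerDl.
Qed.

Lemma bidiffZ k T a b : bidiff act (k *: T) a b = k *: bidiff act T a b.
Proof.
rewrite /bidiff scaler_sumr; apply: eq_bigr => p _.
by rewrite scaler_sumr; apply: eq_bigr => q _; rewrite mxE scalerA.
Qed.

Lemma bidiff0 a b : bidiff act 0 a b = 0.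
Proof. by rewrite -(scale0r (0 : 'M[K]_m)) bidiffZ scale0r. Qed.

Lemma bidiffN T a b : bidiff act (- T) a b = - bidiff act T a b.
Proof. by rewrite -scaleN1r bidiffZ scaleN1r. Qed.

Lemma bidiff_sum a b I (r : seq I) (P : pred I) (F : I -> 'M[K]_m) :
  bidiff act (\sum_(i <- r | P i) F i) a b = \sum_(i <- r | P i) bidiff act (F i) a b.
Proof.
exact: (big_morph (fun T => bidiff act T a b) (fun T S => bidiffD T S a b) (bidiff0 a b)).
Qed.

End BidiffLinear.

Section Action.
Variables (K : fieldType) (m : nat) (A : comAlgType K).
Variables (br : 'rV[K]_m -> 'rV[K]_m -> 'rV[K]_m) (act : 'rV[K]_m -> A -> A).
Hypothesis actP : is_action br act.

Lemma actDl u v a : act (u + v) a = act u a + act v a.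
Proof. by have [actZDl _] := actP; rewrite -[u]scale1r actZDl !scale1r. Qed.

Lemma act0l a : act 0 a = 0.
Proof. by apply/(addrI (act 0 a)); rewrite -actDl !addr0. Qed.

Lemma actZl k u a : act (k *: u) a = k *: act u a.
Proof. by have [actZDl _] := actP; rewrite -[k *: u]addr0 actZDl act0l addr0. Qed.

Lemma act_suml a I (r : seq I) (P : pred I) (F : I -> 'rV[K]_m) :
  act (\sum_(i <- r | P i) F i) a = \sum_(i <- r | P i) act (F i) a.
Proof. exact: (big_morph (act^~ a) (fun u v => actDl u v a) (act0l a)). Qed.

Lemma actDr x a b : act x (a + b) = act x a + act x b.
Proof. by have [_ [actZDr _]] := actP; rewrite -[a]scale1r actZDr !scale1r. Qed.

Lemma act0r x : act x 0 = 0.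
Proof. by apply/(addrI (act x 0)); rewrite -actDr !addr0. Qed.

Lemma actZr x k a : act x (k *: a) = k *: act x a.
Proof. by have [_ [actZDr _]] := actP; rewrite -[k *: a]addr0 actZDr act0r addr0. Qed.

Lemma actNr x a : act x (- a) = - act x a.
Proof. by rewrite -scaleN1r actZr scaleN1r. Qed.

Lemma act_sumr x I (r : seq I) (P : pred I) (F : I -> A) :
  act x (\sum_(i <- r | P i) F i) = \sum_(i <- r | P i) act x (F i).
Proof. exact: (big_morph (act x) (actDr x) (act0r x)). Qed.

Lemma actM x a b : act x (a * b) = act x a * b + a * act x b.
Proof. by have [_ [_ []]] := actP. Qed.

Lemma act_br x y a : act (br x y) a = act x (act y a) - act y (act x a).
Proof. by have [_ [_ [_]]] := actP. Qed.

Lemma act_rowE u a : act u a = \sum_(p < m) u 0 p *: act (bvec p) a.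
Proof.
by rewrite {1}[u]row_sum_delta act_suml; apply: eq_bigr => p _; rewrite actZl.
Qed.

Lemma bidiff_tens u v a b : bidiff act (tens u v) a b = act u a * act v b.
Proof.
rewrite (act_rowE u) (act_rowE v) mulr_suml; apply: eq_bigr => p _.
rewrite mulr_sumr; apply: eq_bigr => q _.
by rewrite /tens !mxE big_ord1 !mxE -scalerAl -scalerAr scalerA.
Qed.

Lemma bidiff_adT T x a b :
  act x (bidiff act T a b) - bidiff act T (act x a) b - bidiff act T a (act x b)
  = bidiff act (adT br x T) a b.
Proof.
have -> : bidiff act (adT br x T) a b = \sum_p \sum_q T p q *:
   (act (br x (bvec p)) a * act (bvec q) b + act (bvec p) a * act (br x (bvec q)) b).
  rewrite /adT bidiff_sum; apply: eq_bigr => p _; rewrite bidiff_sum; apply: eq_bigr => q _.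
  by rewrite bidiffZ bidiffD !bidiff_tens.
rewrite /bidiff act_sumr -!sumrB; apply: eq_bigr => p _.
rewrite act_sumr -!sumrB; apply: eq_bigr => q _.
by rewrite actZr -!scalerBr !act_br actM; congr (_ *: _); ring.
Qed.

End Action.

Section Pairing.
Variables (K : fieldType) (n : nat).

Lemma dotrC (u v : 'rV[K]_n) : dotr u v = dotr v u.
Proof.
rewrite /dotr; transitivity ((u *m v^T)^T 0 0); first by rewrite [RHS]mxE.
by rewrite trmx_mul trmxK.
Qed.

Lemma dotr0 (v : 'rV[K]_n) : dotr v 0 = 0.
Proof. by rewrite /dotr trmx0 mulmx0 mxE. Qed.

Lemma dotrNl (u v : 'rV[K]_n) : dotr (- u) v = - dotr u v.
Proof. by rewrite /dotr mulNmx mxE. Qed.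

Lemma dotr_bvec (v : 'rV[K]_n) k : dotr v (bvec k) = v 0 k.
Proof. by rewrite /dotr /bvec trmx_delta -colE mxE. Qed.

Lemma pairDC (u v : 'rV[K]_(n + n)) : pairD u v = pairD v u.
Proof. by rewrite /pairD dotrC addrC dotrC. Qed.

Lemma pairDNl (u v : 'rV[K]_(n + n)) : pairD (- u) v = - pairD u v.
Proof. by rewrite /pairD !linearN /= !dotrNl opprD. Qed.

Lemma pairD_etaD (u : 'rV[K]_(n + n)) k : pairD u (etaD k) = u 0 (lshift n k).
Proof. by rewrite /pairD /etaD /ieta row_mxKr row_mxKl dotr0 addr0 dotr_bvec mxE. Qed.

Lemma pairD_hD (u : 'rV[K]_(n + n)) k : pairD u (hD k) = u 0 (rshift n k).
Proof. by rewrite /pairD /hD /ih row_mxKr row_mxKl dotr0 add0r dotr_bvec mxE. Qed.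

Lemma pairD_ieta (x y : 'rV[K]_n) : pairD (ieta x) (ieta y) = 0.
Proof. by rewrite /pairD /ieta !row_mxKl dotr0 dotrC dotr0 addr0. Qed.

Lemma pairD_ih (x y : 'rV[K]_n) : pairD (ih x) (ih y) = 0.
Proof. by rewrite /pairD /ih !row_mxKr dotr0 dotrC dotr0 addr0. Qed.

End Pairing.

Definition varpi (K : fieldType) (n : nat) (A : comAlgType K)
  (act : 'rV[K]_(n + n) -> A -> A) (a b : A) : A :=
  \sum_(i < n) act (etaD i) a * act (hD i) b.

(* The operator induced by [ρ12, ρ13] + [ρ12, ρ23] + [ρ13, ρ23], ρ = Σ η^i ⊗ h^i. *)
Definition yang_baxter_op (K : fieldType) (n : nat) (A : comAlgType K)
  (brD : 'rV[K]_(n + n) -> 'rV[K]_(n + n) -> 'rV[K]_(n + n))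
  (act : 'rV[K]_(n + n) -> A -> A) (a b c : A) : A :=
  \sum_(i < n) \sum_(j < n)
    (act (brD (etaD i) (etaD j)) a * act (hD i) b * act (hD j) c
     + act (etaD i) a * act (brD (hD i) (etaD j)) b * act (hD j) c
     + act (etaD i) a * act (etaD j) b * act (brD (hD i) (hD j)) c).

Section DoubleAction.
Variables (K : fieldType) (n : nat) (A : comAlgType K).
Variables (brh : 'rV[K]_n -> 'rV[K]_n -> 'rV[K]_n) (delta : 'rV[K]_n -> 'M[K]_n).
Variables (brD : 'rV[K]_(n + n) -> 'rV[K]_(n + n) -> 'rV[K]_(n + n)).
Variable act : 'rV[K]_(n + n) -> A -> A.
Hypotheses (brDP : is_double brh delta brD) (actP : is_action brD act).

Lemma act_pairDE u a : act u a =
  \sum_(k < n) (pairD u (etaD k) *: act (hD k) a + pairD u (hD k) *: act (etaD k) a).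
Proof.
rewrite (act_rowE actP) big_split_ord big_split /=.
congr (_ + _); apply: eq_bigr => k _.
  by rewrite pairD_etaD /bvec delta_mx_lshift.
by rewrite pairD_hD /bvec delta_mx_rshift.
Qed.

Lemma act_br_etaD i j a : act (brD (etaD i) (etaD j)) a =
  \sum_(k < n) pairD (brD (etaD i) (etaD j)) (hD k) *: act (etaD k) a.
Proof.
have [_ [_ [brD_ieta _]]] := brDP.
rewrite act_pairDE; apply: eq_bigr => k _.
by rewrite {1}/etaD brD_ieta pairD_ieta scale0r add0r.
Qed.

Lemma act_br_hD i j a : act (brD (hD i) (hD j)) a =
  \sum_(k < n) pairD (brD (hD i) (hD j)) (etaD k) *: act (hD k) a.
Proof.
have [_ [brD_ih _]] := brDP.
rewrite act_pairDE; apply: eq_bigr => k _.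
by rewrite {2}/hD brD_ih pairD_ih scale0r addr0.
Qed.

Lemma act_br_hD_etaD i j a : act (brD (hD i) (etaD j)) a =
  \sum_(k < n) (pairD (brD (etaD j) (etaD k)) (hD i) *: act (hD k) a
               - pairD (brD (hD i) (hD k)) (etaD j) *: act (etaD k) a).
Proof.
have [brD_lie [_ [_ pairD_inv]]] := brDP.
rewrite act_pairDE; apply: eq_bigr => k _.
rewrite pairD_inv pairDC; congr (_ + _).
by rewrite pairD_inv (lie_antisym brD_lie (etaD j)) pairDC pairDNl pairDC -pairD_inv scaleNr.
Qed.

Lemma yang_baxter_op_eq0 a b c : yang_baxter_op brD act a b c = 0.
Proof.
have [brD_lie _] := brDP.
pose P i j k := pairD (brD (etaD i) (etaD j)) (hD k)
                *: (act (etaD k) a * act (hD i) b * act (hD j) c).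
pose Q i j k := pairD (brD (hD i) (hD j)) (etaD k)
                *: (act (etaD i) a * act (etaD j) b * act (hD k) c).
(* The mixed bracket [h^i, η^j] contributes the terms - P k j i and - Q i k j. *)
have -> : yang_baxter_op brD act a b c =
    (\sum_(i < n) \sum_(j < n) \sum_(k < n) P i j k
     - \sum_(i < n) \sum_(j < n) \sum_(k < n) P k j i)
  + (\sum_(i < n) \sum_(j < n) \sum_(k < n) Q i j k
     - \sum_(i < n) \sum_(j < n) \sum_(k < n) Q i k j).
  rewrite -!sumrB -big_split; apply: eq_bigr => i _.
  rewrite -!sumrB -big_split; apply: eq_bigr => j _.
  rewrite -!sumrB -big_split act_br_etaD act_br_hD_etaD act_br_hD.
  rewrite !(mulr_suml, mulr_sumr) -!big_split /=; apply: eq_bigr => k _.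
  rewrite /P /Q (lie_antisym brD_lie (etaD k) (etaD j)) pairDNl scaleNr.
  by rewrite !scale_in_alg; ring.
rewrite [X in _ - X + _]triple_sum_rev subrr add0r.
suff -> : \sum_(i < n) \sum_(j < n) \sum_(k < n) Q i k j
        = \sum_(i < n) \sum_(j < n) \sum_(k < n) Q i j k by rewrite subrr.
by apply: eq_bigr => i _; rewrite exchange_big.
Qed.

Lemma varpiNr a b : varpi act a (- b) = - varpi act a b.
Proof.
by rewrite /varpi -sumrN; apply: eq_bigr => i _; rewrite (actNr actP) mulrN.
Qed.

Lemma varpi_varpir a b c : varpi act a (varpi act b c) =
    \sum_(i < n) \sum_(j < n) act (etaD i) a * act (hD i) (act (etaD j) b) * act (hD j) c
  + \sum_(i < n) \sum_(j < n) act (etaD i) a * act (etaD j) b * act (hD i) (act (hD j) c).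
Proof.
rewrite /varpi -big_split; apply: eq_bigr => i _.
rewrite (act_sumr actP) mulr_sumr -big_split /=; apply: eq_bigr => j _.
by rewrite (actM actP); ring.
Qed.

Lemma varpi_varpil a b c : varpi act (varpi act a b) c =
    \sum_(i < n) \sum_(j < n) act (etaD j) (act (etaD i) a) * act (hD i) b * act (hD j) c
  + \sum_(i < n) \sum_(j < n) act (etaD i) a * act (etaD j) (act (hD i) b) * act (hD j) c.
Proof.
rewrite [X in X + _]exchange_big [X in _ + X]exchange_big /= /varpi -big_split.
apply: eq_bigr => j _; rewrite (act_sumr actP) mulr_suml -big_split /=.
by apply: eq_bigr => i _; rewrite (actM actP); ring.
Qed.

Section Antisymmetric.
Hypothesis varpi_anti : forall a b, varpi act a b = - varpi act b a.

Lemma varpi_jacobiator a b c :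
  varpi act a (varpi act b c) + varpi act b (varpi act c a) + varpi act c (varpi act a b)
  = yang_baxter_op brD act a b c.
Proof.
have varpi_varpir_swap : varpi act b (varpi act a c) =
    - \sum_(i < n) \sum_(j < n) act (etaD i) (act (etaD j) a) * act (hD i) b * act (hD j) c
    + \sum_(i < n) \sum_(j < n) act (etaD j) b * act (etaD i) a * act (hD j) (act (hD i) c).
  rewrite varpi_varpir [X in _ + X]exchange_big /=; congr (_ + _).
  rewrite exchange_big [X in - X]exchange_big /= -sumrN; apply: eq_bigr => j _.
  transitivity (varpi act b (act (etaD j) a) * act (hD j) c); first by rewrite mulr_suml.
  by rewrite varpi_anti mulNr mulr_suml.
rewrite (varpi_anti c a) varpiNr (varpi_anti c (varpi act a b)) varpi_varpir_swap.
rewrite varpi_varpir varpi_varpil /yang_baxter_op.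
rewrite -!sumrN -!big_split -!sumrB /=; apply: eq_bigr => i _.
rewrite -!sumrN -!big_split -!sumrB /=; apply: eq_bigr => j _.
by rewrite !(act_br actP); ring.
Qed.

Lemma varpi_is_poisson : is_poisson (varpi act).
Proof.
split; [|split; [exact: varpi_anti | split]].
- move=> k a b c; rewrite /varpi scaler_sumr -big_split; apply: eq_bigr => i _.
  by rewrite (actDr actP) (actZr actP) mulrDl scalerAl.
- move=> a b c; rewrite /varpi mulr_suml mulr_sumr -big_split /=; apply: eq_bigr => i _.
  by rewrite (actM actP); ring.
- by move=> a b c; rewrite varpi_jacobiator yang_baxter_op_eq0.
Qed.

End Antisymmetric.

End DoubleAction.

Section ThetaZero.
Variables (K : fieldType) (n : nat) (A : comAlgType K).
Variables (brD : 'rV[K]_(n + n) -> 'rV[K]_(n + n) -> 'rV[K]_(n + n)).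
Variable act : 'rV[K]_(n + n) -> A -> A.
Hypotheses (two_neq0 : (2%:R : K) != 0) (actP : is_action brD act).
Hypothesis theta0 : forall a b, bidiff act (thetamat K n) a b = 0.

Lemma varpi_antisym a b : varpi act a b = - varpi act b a.
Proof.
apply/eqP; rewrite -addr_eq0; apply/eqP.
have := theta0 a b; rewrite /thetamat bidiffZ bidiff_sum => /eqP.
rewrite scaler_eq0 invr_eq0 (negbTE two_neq0) /= => /eqP <-.
rewrite /varpi -big_split; apply: eq_bigr => i _.
by rewrite bidiffD !(bidiff_tens actP) [act (etaD i) b * _]mulrC.
Qed.

Lemma bidiff_rmat a b : bidiff act (rmat K n) a b = varpi act a b.
Proof.
rewrite /rmat bidiff_sum.
under eq_bigr do rewrite /wedge bidiffZ bidiffD bidiffN !(bidiff_tens actP).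
rewrite -scaler_sumr sumrB.
have -> : \sum_(i < n) act (hD i) a * act (etaD i) b = - varpi act a b.
  by rewrite varpi_antisym opprK; apply: eq_bigr => i _; rewrite mulrC.
by rewrite opprK -mulr2n -scaler_nat scalerA mulVf // scale1r.
Qed.

End ThetaZero.

Lemma is_poisson_ext (K : fieldType) (A : comAlgType K) (P Q : A -> A -> A) :
  (forall a b, P a b = Q a b) -> is_poisson Q -> is_poisson P.
Proof.
move=> PQ [QZD [QN [QM QJ]]]; split; [|split; [|split]] => *; rewrite !PQ.
- exact: QZD.
- exact: QN.
- exact: QM.
- exact: QJ.
Qed.

Theorem proposition3p15 (K : fieldType) (n : nat) (two_neq0 : (2%:R : K) != 0)
  (brh : 'rV[K]_n -> 'rV[K]_n -> 'rV[K]_n) (delta : 'rV[K]_n -> 'M[K]_n)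
  (brD : 'rV[K]_(n + n) -> 'rV[K]_(n + n) -> 'rV[K]_(n + n))
  (A : comAlgType K) (act : 'rV[K]_(n + n) -> A -> A) :
  is_lie_bialg brh delta ->
  is_double brh delta brD ->
  is_poisson_h_base brD act ->
  is_poisson (bidiff act (rmat K n)) /\
  is_poisson_lie (mu brD) act (bidiff act (rmat K n)) /\
  (forall a b, bidiff act (rmat K n) a b = \sum_(i < n) act (etaD i) a * act (hD i) b).
Proof.
move=> _ brDP [actP theta0].
have rmatE := bidiff_rmat two_neq0 actP theta0.
split; [|split]; last exact: rmatE.
- apply: is_poisson_ext rmatE _.
  exact: varpi_is_poisson brDP actP (varpi_antisym two_neq0 actP theta0).
- by move=> x a b; rewrite (bidiff_adT actP).
Qed.
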